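(* Let $G$ be a locally compact group acting without inversions on a locally finite regular tree $T$, and let $L$ be a geodesic line in $T$ satisfying: (i) for every geodesic segment $[x,y]$ of finite length in $T$ there exists $g\in G$ with $[gx,gy]\subset L$; (ii) the set-wise stabilizer $H$ of $L$ in $G$ acts transitively on the geometric edges of $L$. Then for every $n\ge 0$, restriction to $L^{n+1}$ induces an isomorphism $$\ell^\infty_{\mathcal A}(T^{n+1},\mathbb{R})^G\;\xrightarrow{\ \cong\ }\;\ell^\infty_{\mathrm{alt}}(L^{n+1},\mathbb{R})^H .$$
   Context: Identify $T$ and $L$ with their vertex sets. A tuple $(x_0,\ldots,x_n)$ of vertices is aligned if all $x_i$ lie on a common geodesic segment of $T$. $\ell^\infty_{\mathcal A}(T^{n+1},\mathbb{R})$ denotes the space of bounded alternating functions $T^{n+1}\to\mathbb{R}$ (i.e. $f(x_{\sigma(0)},\ldots,x_{\sigma(n)})=\mathrm{sgn}(\sigma)f(x_0,\ldots,x_n)$) supported on aligned tuples; $\ell^\infty_{\mathrm{alt}}(L^{n+1},\mathbb{R})$ denotes bounded alternating functions on $L^{n+1}$. The superscripts $G$, $H$ denote invariants under the diagonal action. ''Without inversions'' means no element swaps the endpoints of an edge. *)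

From HB Require Import structures.
From mathcomp Require Import all_boot all_order all_algebra perm.
From mathcomp Require Import all_classical all_reals topology.
From Stdlib Require Import List ZArith.

Set Implicit Arguments.
Unset Strict Implicit.
Unset Printing Implicit Defensive.
Import Order.TTheory GRing.Theory Num.Theory.
Local Open Scope ring_scope.

#[short(type="topGroupType")]
HB.structure Definition TopGroup := {G of monoid.Group G & Topological G}.

Definition locally_compact_group (G : topGroupType) : Prop :=
  [/\ continuous (fun p : G * G => monoid.mul p.1 p.2),
      continuous (fun g : G => monoid.inv g),
      hausdorff_space G &
      locally_compact [set: G]].

Section Graphs.
Variables (V : Type) (adj : V -> V -> Prop).

Fixpoint walk (x : V) (p : list V) : Prop :=
  match p with
  | nil => True
  | y :: q => adj x y /\ walk y q
  end.

(* z lies on the geodesic segment [x,y] : z lies on a path (walk without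
   repeated vertices) from x to y; in a tree such a path is unique. *)
Definition on_segment (x y z : V) : Prop :=
  exists p : list V, walk x p /\ List.last p x = y /\ NoDup (x :: p) /\
    In z (x :: p).

Definition is_tree : Prop :=
  [/\ (forall x y, adj x y -> adj y x),
      (forall x, ~ adj x x),
      (forall x y, exists p, walk x p /\ List.last p x = y) &
      (forall x p, walk x p -> NoDup (x :: p) -> (2 <= length p)%coq_nat ->
         ~ adj (List.last p x) x)].

Definition regular_of_degree (d : nat) : Prop :=
  forall v, exists s : list V, NoDup s /\ (forall w, In w s <-> adj v w) /\
    length s = d.

Definition geodesic_line (l : Z -> V) : Prop :=
  (forall k, adj (l k) (l (k + 1)%Z)) /\ (forall k k', l k = l k' -> k = k').

End Graphs.

Section Actions.
Variables (G : topGroupType) (V : Type) (adj : V -> V -> Prop)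
  (act : G -> V -> V).

Definition is_action_by_automorphisms : Prop :=
  [/\ (forall v, act (@monoid.one G) v = v),
      (forall g h v, act (monoid.mul g h) v = act g (act h v)) &
      (forall g u v, adj u v <-> adj (act g u) (act g v))].

(* continuity of the action (V discrete): vertex stabilizers are open *)
Definition continuous_action : Prop :=
  forall v, open [set g : G | act g v = v]%classic.

Definition without_inversions : Prop :=
  forall g u v, adj u v -> ~ (act g u = v /\ act g v = u).

End Actions.

Section Functions.
Variables (R : realType) (n : nat) (X : Type).

Definition bounded_fun (f : ('I_n.+1 -> X) -> R) : Prop :=
  exists M : R, forall x, `|f x| <= M.

Definition alternating (f : ('I_n.+1 -> X) -> R) : Prop :=
  forall (s : 'S_n.+1) (x : 'I_n.+1 -> X),
    f (fun i => x (s i)) = (-1) ^+ odd_perm s * f x.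

End Functions.

Definition aligned (V : Type) (adj : V -> V -> Prop) (n : nat)
  (x : 'I_n.+1 -> V) : Prop :=
  exists a b, forall i, on_segment adj a b (x i).

Definition on_line (V : Type) (l : Z -> V) (v : V) : Prop := exists k, l k = v.

Definition stabilizes_line (G : topGroupType) (V : Type) (act : G -> V -> V)
  (l : Z -> V) (g : G) : Prop :=
  forall v, on_line l (act g v) <-> on_line l v.

Definition linf_A_inv (R : realType) (n : nat) (G : topGroupType) (V : Type)
  (adj : V -> V -> Prop) (act : G -> V -> V) (f : ('I_n.+1 -> V) -> R) : Prop :=
  [/\ bounded_fun f, alternating f,
      (forall x, ~ aligned adj x -> f x = 0) &
      (forall g x, f (fun i => act g (x i)) = f x)].

Definition line_vertex (V : Type) (l : Z -> V) := {v : V | on_line l v}.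

Definition linf_alt_inv (R : realType) (n : nat) (G : topGroupType) (V : Type)
  (act : G -> V -> V) (l : Z -> V) (F : ('I_n.+1 -> line_vertex l) -> R) : Prop :=
  [/\ bounded_fun F, alternating F &
      (forall h, stabilizes_line act l h ->
        forall y z : 'I_n.+1 -> line_vertex l,
          (forall i, proj1_sig (z i) = act h (proj1_sig (y i))) -> F z = F y)].

Definition restrict_to_line (R : realType) (n : nat) (V : Type) (l : Z -> V)
  (f : ('I_n.+1 -> V) -> R) : ('I_n.+1 -> line_vertex l) -> R :=
  fun y => f (fun i => proj1_sig (y i)).
Arguments restrict_to_line {R n V} l f y.

(* By (i), every aligned tuple is moved into L by some element of G, and
   invariant cochains vanish off aligned tuples, so restriction to L is
   injective. Conversely, F on L extends by f(x) := F(g x) for any g moving x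
   into L. This is independent of g because whenever y and u y both lie in L,
   some h in H agrees with u on y: by (i) u maps the segment of L spanned by y
   into L, injective walks in L are translations or reflections, and by (ii)
   an element of H matches u on an edge of that segment -- with the right
   orientation, since G acts without inversions. *)

From HB Require Import structures.
From mathcomp Require Import all_boot all_order all_algebra perm.
From mathcomp Require Import all_classical all_reals topology.
From Stdlib Require Import List ZArith Lia FinFun.
Import Order.TTheory GRing.Theory Num.Theory.
Local Open Scope ring_scope.
Set Implicit Arguments.
Unset Strict Implicit.

Lemma List_last_cons (T : Type) (a : T) (s : list T) d :
  List.last (a :: s) d = List.last s a.
Proof.
by elim: s a d => [|x s IH] a d //; rewrite -[LHS]/(List.last (x :: s) d) (IH x d) (IH x a).
Qed.

Lemma List_last_map (T U : Type) (f : T -> U) s x :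
  List.last (List.map f s) (f x) = f (List.last s x).
Proof. by elim: s x => [|y s IH] x //; rewrite map_cons !List_last_cons IH. Qed.

Lemma exists_argminZ (I : finType) (i0 : I) (f : I -> Z) :
  exists i, forall j, (f i <= f j)%Z.
Proof.
suff [i hi] : exists i, forall j, j \in enum I -> (f i <= f j)%Z.
  by exists i => j; apply: hi; rewrite mem_enum.
elim: (enum I) => [|x s [i IH]]; first by exists i0.
have [le|gt] := Z_le_gt_dec (f x) (f i); [exists x | exists i];
  by move=> j; rewrite inE => /orP[/eqP ->|/IH]; lia.
Qed.

Section GraphMaps.
Variables (V W : Type) (adjV : V -> V -> Prop) (adjW : W -> W -> Prop) (f : V -> W).
Hypothesis f_adj : forall u v, adjV u v -> adjW (f u) (f v).

Lemma walk_map p x : walk adjV x p -> walk adjW (f x) (List.map f p).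
Proof. by elim: p x => [|y p IH] x //= [xy yp]; split; [apply: f_adj | apply: IH]. Qed.

Lemma on_segment_map a b z : injective f ->
  on_segment adjV a b z -> on_segment adjW (f a) (f b) (f z).
Proof.
move=> f_inj [p [p_walk [p_last [p_uniq z_in]]]]; exists (List.map f p).
split; first exact: walk_map.
split; first by rewrite List_last_map p_last.
split; first exact: (Injective_map_NoDup f_inj p_uniq : NoDup (List.map f (a :: p))).
exact: (in_map f (a :: p)).
Qed.

End GraphMaps.

Section Walks.
Variables (V : Type) (adj : V -> V -> Prop).

Fixpoint zpath (w : Z -> V) (c : Z) (N : nat) : list V :=
  if N is N'.+1 then w (c + 1)%Z :: zpath w (c + 1)%Z N' else nil.

Variable w : Z -> V.
Hypotheses (w_adj : forall i, adj (w i) (w (i + 1)%Z)) (w_inj : injective w).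

Lemma zpath_walk N c : walk adj (w c) (zpath w c N).
Proof. by elim: N c => [|N IH] c //=; split. Qed.

Lemma zpath_last N c : List.last (zpath w c N) (w c) = w (c + Z.of_nat N)%Z.
Proof.
elim: N c => [|N IH] c; first by rewrite Z.add_0_r.
rewrite -[zpath w c N.+1]/(w (c + 1)%Z :: zpath w (c + 1)%Z N) List_last_cons IH.
by congr w; lia.
Qed.

Lemma zpath_length N c : length (zpath w c N) = N.
Proof. by elim: N c => [|N IH] c //=; rewrite IH. Qed.

Lemma In_zpath N c z : In z (zpath w c N) ->
  exists2 m, (c < m <= c + Z.of_nat N)%Z & z = w m.
Proof.
elim: N c => [|N IH] c //= [<-|/IH [m hm ->]]; first by exists (c + 1)%Z => //; lia.
by exists m => //; lia.
Qed.

Lemma zpath_In N c j : (c <= j <= c + Z.of_nat N)%Z -> In (w j) (w c :: zpath w c N).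
Proof.
elim: N c => [|N IH] c hj /=; first by left; congr w; lia.
have [->|ne] := Z.eq_dec j c; [by left | right; apply: IH; lia].
Qed.

Lemma zpath_NoDup N c : NoDup (w c :: zpath w c N).
Proof.
elim: N c => [|N IH] c /=; first by constructor; [|constructor].
constructor; last exact: IH.
by move=> [/w_inj|/In_zpath [m hm /w_inj]]; lia.
Qed.

Lemma zwalk_on_segment a b j : (a <= j <= b)%Z -> on_segment adj (w a) (w b) (w j).
Proof.
move=> hj; exists (zpath w a (Z.to_nat (b - a))).
split; first exact: zpath_walk.
split; first by rewrite zpath_last; congr w; lia.
by split; [exact: zpath_NoDup | apply: zpath_In; lia].
Qed.

End Walks.

Section TreeLine.
Variables (V : Type) (adj : V -> V -> Prop) (l : Z -> V).
Hypotheses (tree : is_tree adj) (line : geodesic_line adj l).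

Lemma tree_adj_sym x y : adj x y -> adj y x.
Proof. by case: tree => sym _ _ _; apply: sym. Qed.

Lemma path2_on_segment x y z v : adj x y -> adj y z -> x <> z ->
  In v [:: x; y; z] -> on_segment adj x z v.
Proof.
have [_ irr _ _] := tree.
have adj_neq u u' : adj u u' -> u' <> u by move=> h e; apply: (irr u); rewrite -{2}e.
move=> xy yz xz hv; exists [:: y; z]; do !split=> //.
constructor; first by case=> [/(adj_neq _ _ xy) | [/esym | []]].
constructor; first by case=> [/(adj_neq _ _ yz) | []].
by constructor; [case | constructor].
Qed.

Lemma line_on_segment a b j : ((a <= j <= b) \/ (b <= j <= a))%Z ->
  on_segment adj (l a) (l b) (l j).
Proof.
have [l_adj l_inj] := line.
case=> hj; first exact: zwalk_on_segment.
pose r i := l (- i)%Z.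
have r_adj i : adj (r i) (r (i + 1)%Z).
  by apply: tree_adj_sym; rewrite /r (_ : (- i = - (i + 1) + 1)%Z) //; lia.
have r_inj : injective r by move=> i k /l_inj; lia.
have := zwalk_on_segment r_adj r_inj (a := (- a)%Z) (b := (- b)%Z) (j := (- j)%Z).
by rewrite /r !Z.opp_involutive; apply; lia.
Qed.

Lemma line_nonadj a b : (a + 2 <= b)%Z -> ~ adj (l b) (l a).
Proof.
have [l_adj l_inj] := line; have [_ _ _ acyclic] := tree.
move=> hab; have := acyclic (l a) _ (zpath_walk l_adj (Z.to_nat (b - a)) a)
  (zpath_NoDup l_inj _ a).
rewrite zpath_length zpath_last (_ : (a + Z.of_nat (Z.to_nat (b - a)) = b)%Z); last lia.
by apply; lia.
Qed.

Lemma line_adjE a b : adj (l a) (l b) -> (b = a + 1 \/ b = a - 1)%Z.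
Proof.
move=> hab; have [_ irr _ _] := tree.
have [e|ne] := Z.eq_dec a b; first by move: hab; rewrite e => /irr.
have [far|] := Z_le_gt_dec (a + 2) b; first by case: (line_nonadj far (tree_adj_sym hab)).
have [far|] := Z_le_gt_dec (b + 2) a; first by case: (line_nonadj far hab).
lia.
Qed.

Lemma line_walk_affine (w : Z -> Z) a b : (a <= b)%Z ->
  (forall j, (a <= j < b)%Z -> adj (l (w j)) (l (w (j + 1)%Z))) ->
  (forall i j, (a <= i <= b)%Z -> (a <= j <= b)%Z -> w i = w j -> i = j) ->
  exists c s, (s = 1 \/ s = -1)%Z /\
    forall j, (a <= j <= b)%Z -> w j = (c + s * (j - a))%Z.
Proof.
move=> ab; rewrite (_ : b = a + Z.of_nat (Z.to_nat (b - a)))%Z; last lia.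
elim: (Z.to_nat (b - a)) => [|N IH] w_adj w_inj.
  by exists (w a), 1%Z; split=> [|j hj]; [left | rewrite (_ : j = a); lia].
have [c [s [hs wE]]] : exists c s, (s = 1 \/ s = -1)%Z /\
    forall j, (a <= j <= a + Z.of_nat N)%Z -> w j = (c + s * (j - a))%Z.
  by apply: IH => [j hj | i j hi hj]; [apply: w_adj | apply: w_inj]; lia.
set m := (a + Z.of_nat N)%Z.
have w_step : (w (m + 1) = w m + 1 \/ w (m + 1) = w m - 1)%Z.
  by apply: line_adjE; apply: w_adj; lia.
have [N0|N_pos] := Nat.eq_dec N 0.
  subst N; rewrite /m /= Z.add_0_r in w_step.
  exists (w a), (w (a + 1) - w a)%Z; split=> [|j hj]; first lia.
  have j_cases : (j = a \/ j = a + 1)%Z by lia.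
  by case: j_cases => ->; lia.
have w_back : w (m + 1)%Z <> w (m - 1)%Z by move/w_inj; lia.
exists c, s; split=> // j hj.
have [j_le|->] : (j <= m \/ j = m + 1)%Z by lia.
  by apply: wE; lia.
have w_m : w m = (c + s * (m - a))%Z by apply: wE; lia.
have w_m1 : w (m - 1)%Z = (c + s * (m - 1 - a))%Z by apply: wE; lia.
by case: hs w_m w_m1 => -> w_m w_m1; lia.
Qed.

End TreeLine.

Section TreeAction.
Variables (G : topGroupType) (V : Type) (adj : V -> V -> Prop)
  (act : G -> V -> V) (l : Z -> V).
Hypotheses (tree : is_tree adj) (line : geodesic_line adj l)
  (action : is_action_by_automorphisms adj act).

Lemma act1 v : act monoid.one v = v.
Proof. by case: action. Qed.

Lemma actM g h v : act (monoid.mul g h) v = act g (act h v).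
Proof. by case: action. Qed.

Lemma act_adj g u v : adj u v -> adj (act g u) (act g v).
Proof. by case: action => _ _ act_adjE /act_adjE. Qed.

Lemma actK g v : act (monoid.inv g) (act g v) = v.
Proof. by rewrite -actM monoid.mulVg act1. Qed.

Lemma actKV g v : act g (act (monoid.inv g) v) = v.
Proof. by rewrite -actM monoid.mulgV act1. Qed.

Lemma act_inj g : injective (act g).
Proof. exact: can_inj (actK g). Qed.

Lemma on_segment_act g a b z :
  on_segment adj a b z -> on_segment adj (act g a) (act g b) (act g z).
Proof. exact/on_segment_map/act_inj/act_adj. Qed.

Lemma stabilizes_lineM g h : stabilizes_line act l g -> stabilizes_line act l h ->
  stabilizes_line act l (monoid.mul g h).
Proof. by move=> g_stab h_stab v; rewrite actM g_stab h_stab. Qed.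

Lemma stabilizes_lineV g : stabilizes_line act l g ->
  stabilizes_line act l (monoid.inv g).
Proof. by move=> g_stab v; rewrite -g_stab actKV. Qed.

Lemma act_line_affine k a b : (a <= b)%Z ->
  (forall j, (a <= j <= b)%Z -> on_line l (act k (l j))) ->
  exists c s, (s = 1 \/ s = -1)%Z /\
    forall j, (a <= j <= b)%Z -> act k (l j) = l (c + s * (j - a))%Z.
Proof.
move=> ab k_on; have [l_adj l_inj] := line.
have [w wE] : {w : Z -> Z & forall j, (a <= j <= b)%Z -> l (w j) = act k (l j)}.
  apply: (boolp.choice (P := fun j c => (a <= j <= b)%Z -> l c = act k (l j))) => j.
  have [/k_on [c <-]|j_out] := boolp.pselect (a <= j <= b)%Z; first by exists c.
  by exists 0%Z => /j_out.
have [j hj|i j hi hj|c [s [hs w_affine]]] := line_walk_affine tree line (w := w) ab.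
- by rewrite !wE; [apply: act_adj | lia..].
- by move=> /(congr1 l); rewrite !wE // => /act_inj /l_inj.
by exists c, s; split=> // j hj; rewrite -wE // w_affine.
Qed.

Lemma aligned_of_act_on_line n (x : 'I_n.+1 -> V) g :
  (forall i, on_line l (act g (x i))) -> aligned adj x.
Proof.
move=> /boolp.choice [b xE].
have [i0 b_min] := exists_argminZ ord0 b.
have [i1 b_max] := exists_argminZ ord0 (fun i => - b i)%Z.
exists (act (monoid.inv g) (l (b i0))), (act (monoid.inv g) (l (b i1))) => i.
rewrite -[x i](actK g) -xE; apply: on_segment_act; apply: line_on_segment => //.
by have := b_min i; have := b_max i; lia.
Qed.

Section LineTransitivity.
Hypotheses (no_inversions : without_inversions adj act)
  (segments_into_line : forall x y : V, exists g : G,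
     forall z, on_segment adj (act g x) (act g y) z -> on_line l z)
  (stabilizer_edge_transitive : forall k k' : Z, exists h : G,
     stabilizes_line act l h /\
     ((act h (l k) = l k' /\ act h (l (k + 1)%Z) = l (k' + 1)%Z) \/
      (act h (l k) = l (k' + 1)%Z /\ act h (l (k + 1)%Z) = l k'))).

Lemma stabilizer_agrees_on_segment k a b : (a < b)%Z ->
  (forall j, (a <= j <= b)%Z -> on_line l (act k (l j))) ->
  exists h, stabilizes_line act l h /\
    forall j, (a <= j <= b)%Z -> act h (l j) = act k (l j).
Proof.
move=> ab k_on; have [l_adj l_inj] := line.
have a_in : (a <= a <= b)%Z by lia.
have a1_in : (a <= a + 1 <= b)%Z by lia.
have [c [s [hs kE]]] := act_line_affine (Z.lt_le_incl _ _ ab) k_on.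
have [h [h_stab h_edge]] : exists h, stabilizes_line act l h /\
    ((act h (l a) = act k (l a) /\ act h (l (a + 1)%Z) = act k (l (a + 1)%Z)) \/
     (act h (l a) = act k (l (a + 1)%Z) /\ act h (l (a + 1)%Z) = act k (l a))).
  rewrite !kE // Z.sub_diag Z.mul_0_r Z.add_0_r Z.add_simpl_l Z.mul_1_r.
  case: hs => ->; first exact: stabilizer_edge_transitive.
  have [h [h_stab h_edge]] := stabilizer_edge_transitive a (c + -1)%Z.
  rewrite (_ : (c + -1 + 1 = c)%Z) in h_edge; last lia.
  by exists h; split=> //; case: h_edge; [right | left].
(* a flip of the edge would make h^-1 k an inversion *)
case: h_edge => [[h_a h_a1] | [h_a h_a1]]; last first.
  case: (no_inversions (g := monoid.mul (monoid.inv h) k) (l_adj a)).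
  by rewrite !actM -h_a -h_a1 !actK.
have h_on j : (a <= j <= b)%Z -> on_line l (act h (l j)).
  by move=> _; apply/h_stab; exists j.
have [c' [s' [hs' hE]]] := act_line_affine (Z.lt_le_incl _ _ ab) h_on.
move: h_a h_a1; rewrite !hE // !kE // => /l_inj h_a /l_inj h_a1.
have [c'E s'E] : c' = c /\ s' = s by lia.
by exists h; split=> // j hj; rewrite hE // kE // c'E s'E.
Qed.

Lemma act_line_segment_on_line u a c : (a <= c)%Z ->
  on_line l (act u (l a)) -> on_line l (act u (l c)) ->
  forall j, (a <= j <= c)%Z -> on_line l (act u (l j)).
Proof.
move=> ac [ca ca_E] [cb cb_E]; have l_inj := line.2.
have [g g_seg] := segments_into_line (l ca) (l cb).
have gu_on j : (a <= j <= c)%Z -> on_line l (act (monoid.mul g u) (l j)).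
  move=> hj; rewrite actM; apply: g_seg; rewrite ca_E cb_E.
  by do 2!apply: on_segment_act; apply: line_on_segment => //; lia.
have g_on e : (Z.min ca cb <= e <= Z.max ca cb)%Z -> on_line l (act g (l e)).
  by move=> he; apply: g_seg; apply: on_segment_act; apply: line_on_segment => //; lia.
have [c1 [s1 [hs1 guE]]] := act_line_affine ac gu_on.
have min_max : (Z.min ca cb <= Z.max ca cb)%Z by lia.
have [c2 [s2 [hs2 gE]]] := act_line_affine min_max g_on.
(* g u l and g l parametrise the same segment of L, so each g u l j is some g l e *)
have at_a : l (c1 + s1 * (a - a))%Z = l (c2 + s2 * (ca - Z.min ca cb))%Z.
  by rewrite -guE -?gE ?actM ?ca_E //; lia.
have at_c : l (c1 + s1 * (c - a))%Z = l (c2 + s2 * (cb - Z.min ca cb))%Z.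
  by rewrite -guE -?gE ?actM ?cb_E //; lia.
move: at_a at_c => /l_inj at_a /l_inj at_c j hj.
pose e := (Z.min ca cb + s2 * (c1 + s1 * (j - a) - c2))%Z.
have e_in : (Z.min ca cb <= e <= Z.max ca cb)%Z.
  by rewrite /e; case: hs1 hs2 at_a at_c => -> [] ->; lia.
exists e; apply: (@act_inj g); rewrite gE // -actM guE //.
by congr l; rewrite /e; case: hs2 => ->; lia.
Qed.

Lemma stabilizer_agrees_at_vertex u p : on_line l (act u (l p)) ->
  exists h, stabilizes_line act l h /\ act h (l p) = act u (l p).
Proof.
move=> [p' p'_E]; have [l_adj l_inj] := line.
set w := act u (l (p + 1)%Z).
have p'_w : adj (l p') w by rewrite p'_E; apply: act_adj.
(* l q, l p', w is a path, so one element g given by (i) moves all three into L *)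
have [q [q_p' q_w]] : exists q, adj (l q) (l p') /\ l q <> w.
  have [w_E|w_ne] := boolp.pselect (w = l (p' + 1)%Z).
    exists (p' - 1)%Z; rewrite w_E; split; last by move/l_inj; lia.
    by have := l_adj (p' - 1)%Z; rewrite Z.sub_add.
  by exists (p' + 1)%Z; split; [apply: tree_adj_sym | apply/nesym].
have [g g_seg] := segments_into_line (l q) w.
have g_on v : In v [:: l q; l p'; w] -> on_line l (act g v).
  move=> hv; apply: g_seg; apply: on_segment_act.
  exact: (path2_on_segment tree q_p' p'_w q_w hv).
have [h1 [h1_stab h1E]] : exists h1, stabilizes_line act l h1 /\
    forall j, (p <= j <= p + 1)%Z -> act h1 (l j) = act (monoid.mul g u) (l j).
  apply: stabilizer_agrees_on_segment; first lia.
  move=> j hj; rewrite actM; have [->|->] : (j = p \/ j = p + 1)%Z by lia.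
    by rewrite -p'_E; apply: g_on; right; left.
  by apply: g_on; right; right; left.
have [h2 [h2_stab h2E]] : exists h2, stabilizes_line act l h2 /\
    forall j, (Z.min q p' <= j <= Z.min q p' + 1)%Z -> act h2 (l j) = act g (l j).
  apply: stabilizer_agrees_on_segment; first lia.
  have := line_adjE tree line q_p'.
  move=> q_p'_E j hj; have [->|->] : (j = q \/ j = p')%Z by lia.
    by apply: g_on; left.
  by apply: g_on; right; left.
exists (monoid.mul (monoid.inv h2) h1); split.
  by apply: stabilizes_lineM => //; apply: stabilizes_lineV.
rewrite actM h1E; last lia.
rewrite actM -p'_E -h2E ?actK //.
by have := line_adjE tree line q_p'; lia.
Qed.

Lemma stabilizer_agrees_on_tuple n (y : 'I_n.+1 -> V) u :
  (forall i, on_line l (y i)) -> (forall i, on_line l (act u (y i))) ->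
  exists h, stabilizes_line act l h /\ forall i, act h (y i) = act u (y i).
Proof.
move=> /boolp.choice [b y_E] u_on.
have [i0 b_min] := exists_argminZ ord0 b.
have [i1 b_max] := exists_argminZ ord0 (fun i => - b i)%Z.
have b_range i : (b i0 <= b i <= b i1)%Z by have := b_min i; have := b_max i; lia.
have u_on_l i : on_line l (act u (l (b i))) by rewrite y_E.
have [lt|ge] := Z_lt_ge_dec (b i0) (b i1).
  have [h [h_stab hE]] := stabilizer_agrees_on_segment lt
    (act_line_segment_on_line (Z.lt_le_incl _ _ lt) (u_on_l i0) (u_on_l i1)).
  by exists h; split=> // i; rewrite -y_E; apply: hE.
have y_E' i : y i = l (b i0) by rewrite -y_E; congr l; have := b_range i; lia.
have [h [h_stab hE]] := stabilizer_agrees_at_vertex (u_on_l i0).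
by exists h; split=> // i; rewrite y_E'.
Qed.

Variables (R : realType) (n : nat).
Implicit Types (f : ('I_n.+1 -> V) -> R) (F : ('I_n.+1 -> line_vertex l) -> R).

Lemma restrict_linf_alt_inv f :
  linf_A_inv adj act f -> linf_alt_inv act (restrict_to_line l f).
Proof.
case=> [[M f_le] f_alt _ f_inv]; split.
- by exists M => y; apply: f_le.
- by move=> s y; apply: f_alt.
- move=> h _ y z zE; rewrite /restrict_to_line -(f_inv h (fun i => sval (y i))).
  by congr f; apply: boolp.funext => i; rewrite zE.
Qed.

Lemma linf_A_inv_eq_on_line f1 f2 :
  linf_A_inv adj act f1 -> linf_A_inv adj act f2 ->
  (forall y, restrict_to_line l f1 y = restrict_to_line l f2 y) -> f1 =1 f2.
Proof.
move=> [_ _ f1_al f1_inv] [_ _ f2_al f2_inv] f12 x.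
have [[a [b x_seg]] | x_nal] := boolp.pselect (aligned adj x); last first.
  by rewrite f1_al // f2_al.
have [g g_seg] := segments_into_line a b.
have gx_on i : on_line l (act g (x i)) by apply: g_seg; apply: on_segment_act.
by rewrite -(f1_inv g) -(f2_inv g); apply: (f12 (fun i => exist _ _ (gx_on i))).
Qed.

Lemma linf_alt_inv_ext F : linf_alt_inv act F ->
  forall y z, (forall i, sval (z i) = sval (y i)) -> F z = F y.
Proof.
case=> _ _ F_inv y z zE; apply: (F_inv monoid.one) => [v | i].
  by rewrite act1.
by rewrite act1 zE.
Qed.

Definition line_extension F (x : 'I_n.+1 -> V) : R :=
  match boolp.pselect (exists g, forall i, on_line l (act g (x i))) with
  | left gx => let: exist g g_on := boolp.cid gx in
      F (fun i => exist _ (act g (x i)) (g_on i))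
  | right _ => 0
  end.

Lemma line_extension_out F x : ~ (exists g, forall i, on_line l (act g (x i))) ->
  line_extension F x = 0.
Proof. by rewrite /line_extension; case: boolp.pselect. Qed.

Lemma line_extensionE F : linf_alt_inv act F ->
  forall x g (g_on : forall i, on_line l (act g (x i))),
  line_extension F x = F (fun i => exist _ (act g (x i)) (g_on i)).
Proof.
move=> F_alt x g g_on; rewrite /line_extension.
case: boolp.pselect => [gx | no_g]; last by case: no_g; exists g.
case: boolp.cid => g' g'_on.
have u_on i : on_line l (act (monoid.mul g' (monoid.inv g)) (act g (x i))).
  by rewrite actM actK.
have [h [h_stab hE]] := stabilizer_agrees_on_tuple g_on u_on.
case: F_alt => _ _ F_inv; apply: (F_inv h h_stab) => i /=.
by rewrite hE actM actK.
Qed.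

Lemma line_extension_linf_A_inv F :
  linf_alt_inv act F -> linf_A_inv adj act (line_extension F).
Proof.
move=> F_alt; have [[M F_le] F_sgn _] := F_alt.
have no_g_comp x (k : G) : ~ (exists g, forall i, on_line l (act g (x i))) ->
    ~ (exists g, forall i, on_line l (act g (act k (x i)))).
  by move=> no_g [g g_on]; apply: no_g; exists (monoid.mul g k) => i; rewrite actM.
split.
- exists `|M| => x; rewrite /line_extension; case: boolp.pselect => [gx | _].
    by case: boolp.cid => g g_on; apply: le_trans (F_le _) (ler_norm M).
  by rewrite normr0.
- move=> s x; have [[g g_on] | no_g] := boolp.pselect (exists g, forall i, on_line l (act g (x i))).
    rewrite (line_extensionE F_alt (x := fun i => x (s i)) (fun i => g_on (s i))).
    by rewrite (line_extensionE F_alt g_on); apply: F_sgn.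
  rewrite !line_extension_out ?mulr0 // => -[g g_on]; apply: no_g; exists g => i.
  by rewrite -(permKV s i); apply: g_on.
- move=> x x_nal; apply: line_extension_out => -[g g_on]; apply: x_nal.
  exact: aligned_of_act_on_line g_on.
- move=> k x; have [[g g_on] | no_g] := boolp.pselect (exists g, forall i, on_line l (act g (x i))).
    have gk_on i : on_line l (act (monoid.mul g (monoid.inv k)) (act k (x i))).
      by rewrite actM actK.
    rewrite (line_extensionE F_alt gk_on) (line_extensionE F_alt g_on).
    by apply: linf_alt_inv_ext => // i /=; rewrite actM actK.
  by rewrite !line_extension_out //; apply: no_g_comp.
Qed.

Lemma restrict_line_extension F : linf_alt_inv act F ->
  forall y, restrict_to_line l (line_extension F) y = F y.
Proof.
move=> F_alt y; have y_on i : on_line l (act monoid.one (sval (y i))).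
  by rewrite act1; apply: svalP.
rewrite /restrict_to_line (line_extensionE F_alt y_on).
by apply: linf_alt_inv_ext => // i /=; rewrite act1.
Qed.

End LineTransitivity.
End TreeAction.

Theorem mainTheorem6 (R : realType) (G : topGroupType) (V : Type)
  (adj : V -> V -> Prop) (d : nat) (act : G -> V -> V) (l : Z -> V) (n : nat) :
  locally_compact_group G ->
  is_tree adj -> regular_of_degree adj d ->
  is_action_by_automorphisms adj act -> continuous_action act ->
  without_inversions adj act ->
  geodesic_line adj l ->
  (forall x y : V, exists g : G,
     forall z, on_segment adj (act g x) (act g y) z -> on_line l z) ->
  (forall k k' : Z, exists h : G, stabilizes_line act l h /\
     ((act h (l k) = l k' /\ act h (l (k + 1)%Z) = l (k' + 1)%Z) \/
      (act h (l k) = l (k' + 1)%Z /\ act h (l (k + 1)%Z) = l k'))) ->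
  [/\ (forall f : ('I_n.+1 -> V) -> R, linf_A_inv adj act f ->
         linf_alt_inv act (restrict_to_line l f)),
      (forall f1 f2 : ('I_n.+1 -> V) -> R,
         linf_A_inv adj act f1 -> linf_A_inv adj act f2 ->
         (forall y, restrict_to_line l f1 y = restrict_to_line l f2 y) -> forall x, f1 x = f2 x) &
      (forall F : ('I_n.+1 -> line_vertex l) -> R, linf_alt_inv act F ->
         exists f, linf_A_inv adj act f /\ forall y, restrict_to_line l f y = F y)].
Proof.
move=> _ tree _ action _ no_inv line to_line edge_trans; split.
- exact: restrict_linf_alt_inv.
- exact: linf_A_inv_eq_on_line.
- move=> F F_alt; exists (line_extension act F); split.
    exact: line_extension_linf_A_inv.
  exact: (restrict_line_extension tree line action no_inv to_line edge_trans F_alt).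
Qed.
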